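(* Let $n\ge1$, $K$ the uniform Kasteleyn matrix of the Aztec diamond of size $n$, and for $k,l\in\{0,1\}$ $$H^{k,l}_n(\mathtt{w},\mathtt{b})=\sum_{\substack{1\le x_1\le 2n-1,\ x_1\text{ odd}\\1\le y_2\le 2n-1,\ y_2\text{ odd}}}K^{-1}((x_1,2nk),(2nl,y_2))\,w_1^{x_1}w_2^{2nk}b_1^{2nl}b_2^{y_2}.$$ Then $H^{k,l}_n(\mathtt{w},\mathtt{b})=F^{k,l}_n(\mathtt{w},\mathtt{b})$ for all $k,l\in\{0,1\}$, where $F^{0,0}_n=F_n(w_1^2,b_2^2)w_1b_2$, $F^{0,1}_n=F_n(-1/w_1^2,-b_2^2)w_1^{2n-1}b_1^{2n}b_2\mathrm{i}$, $F^{1,0}_n=F_n(-w_1^2,-1/b_2^2)w_1w_2^{2n}b_2^{2n-1}\mathrm{i}$, $F^{1,1}_n=F_n(1/w_1^2,1/b_2^2)w_1^{2n-1}w_2^{2n}b_1^{2n}b_2^{2n-1}$, with $F_n(w,b)=-\frac{\mathrm{i}}{2}f_n\!\left(\frac{(1+b\mathrm{i})(1+w\mathrm{i})}{2}\right)$.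
   Context: $\mathrm{i}=\sqrt{-1}$. $\mathtt{W}=\{(x_1,x_2): x_1\text{ odd},\ x_2\text{ even},\ 1\le x_1\le 2n-1,\ 0\le x_2\le 2n\}$, $\mathtt{B}=\{(x_1,x_2): x_1\text{ even},\ x_2\text{ odd},\ 0\le x_1\le 2n,\ 1\le x_2\le 2n-1\}$, $e_1=(1,1)$, $e_2=(-1,1)$. The uniform Kasteleyn matrix has rows indexed by $\mathtt{B}$, columns by $\mathtt{W}$, with $K(x,y)=1$ if $x-y=\pm e_1$, $K(x,y)=\mathrm{i}$ if $x-y=\pm e_2$, $0$ otherwise; $K^{-1}$ is indexed by $\mathtt{W}\times\mathtt{B}$. $f_n(t)=(1-t^n)/(1-t)$. *)

From HB Require Import structures.
From mathcomp Require Import all_boot all_order all_algebra.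
Set Implicit Arguments. Unset Strict Implicit. Unset Printing Implicit Defensive.
Import Order.TTheory GRing.Theory Num.Theory.
Local Open Scope ring_scope.

(* The Aztec diamond of size n has #W = #B = n * (n+1).  We index both
   colour classes by 'I_(n * n.+1):
   white j <-> (x1, x2) = (2 (j / (n+1)) + 1, 2 (j mod (n+1)))
   black i <-> (x1, x2) = (2 (i mod (n+1)), 2 (i / (n+1)) + 1)
   These are bijections onto W and B respectively. *)
Definition wx1 {n : nat} (j : 'I_(n * n.+1)) : nat := ((j %/ n.+1).*2).+1.
Definition wx2 {n : nat} (j : 'I_(n * n.+1)) : nat := (j %% n.+1).*2.
Definition bx1 {n : nat} (i : 'I_(n * n.+1)) : nat := (i %% n.+1).*2.
Definition bx2 {n : nat} (i : 'I_(n * n.+1)) : nat := ((i %/ n.+1).*2).+1.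

(* uniform Kasteleyn matrix: rows indexed by B, columns by W;
   K(x,y) = 1 if x - y = +-e1, 'i if x - y = +-e2, 0 otherwise,
   with e1 = (1,1), e2 = (-1,1). *)
Definition kast_entry (C : numClosedFieldType) (n : nat)
    (i j : 'I_(n * n.+1)) : C :=
  let d1 : int := (bx1 i)%:Z - (wx1 j)%:Z in
  let d2 : int := (bx2 i)%:Z - (wx2 j)%:Z in
  if ((d1 == 1) && (d2 == 1)) || ((d1 == -1) && (d2 == -1)) then 1
  else if ((d1 == -1) && (d2 == 1)) || ((d1 == 1) && (d2 == -1)) then 'i
  else 0.

Definition Kast (C : numClosedFieldType) (n : nat) : 'M[C]_(n * n.+1) :=
  \matrix_(i, j) @kast_entry C n i j.

(* K^{-1}: rows indexed by W, columns by B. *)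
Definition Kinv (C : numClosedFieldType) (n : nat) : 'M[C]_(n * n.+1) :=
  invmx (Kast C n).

Definition Hgen (C : numClosedFieldType) (n k l : nat)
    (w1 w2 b1 b2 : C) : C :=
  \sum_(j : 'I_(n * n.+1) | wx2 j == (2 * n * k)%N)
    \sum_(i : 'I_(n * n.+1) | bx1 i == (2 * n * l)%N)
      Kinv C n j i * w1 ^+ wx1 j * w2 ^+ (2 * n * k) * b1 ^+ (2 * n * l)
        * b2 ^+ bx2 i.

(* f_n(t) = (1 - t^n)/(1 - t) = 1 + t + ... + t^(n-1) (polynomial form) *)
Definition fn (C : numClosedFieldType) (n : nat) (t : C) : C :=
  \sum_(m < n) t ^+ m.

Definition Fn (C : numClosedFieldType) (n : nat) (w b : C) : C :=
  - ('i / 2) * fn n ((1 + b * 'i) * (1 + w * 'i) / 2).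

Definition Fgen (C : numClosedFieldType) (n k l : nat)
    (w1 w2 b1 b2 : C) : C :=
  match k, l with
  | 0, 0 => Fn n (w1 ^+ 2) (b2 ^+ 2) * w1 * b2
  | 0, _ => Fn n (- (w1 ^+ 2)^-1) (- b2 ^+ 2)
              * w1 ^+ (2 * n - 1) * b1 ^+ (2 * n) * b2 * 'i
  | _, 0 => Fn n (- w1 ^+ 2) (- (b2 ^+ 2)^-1)
              * w1 * w2 ^+ (2 * n) * b2 ^+ (2 * n - 1) * 'i
  | _, _ => Fn n ((w1 ^+ 2)^-1) ((b2 ^+ 2)^-1)
              * w1 ^+ (2 * n - 1) * w2 ^+ (2 * n) * b1 ^+ (2 * n)
              * b2 ^+ (2 * n - 1)
  end.

(* Encode a vector [Y] on the white vertices by the polynomials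
   [y_r(X) = sum_a Y(2a+1, 2r) X^a].  The row [(2m, 2c+1)] of [K Y = v] says
   that the coefficient of [X^m] in [p y_c + q y_(c+1)] is [v(2m, 2c+1)], where
   [p = X + i] and [q = 1 + i X]; telescoping in [c] gives
   [p^n y_0 - (-q)^n y_n = sum_c p^(n-1-c) (-q)^c v_c].  Since [p] and [-q] are
   coprime and [deg y_0 < n], this identity determines [y_0] and [y_n] (and,
   for [v = 0], shows that [K] is invertible).  Now [H^(k,l)] is
   [w1 w2^(2nk) y_(nk)(w1^2)] for [Y = K^-1 v], [v] the generating vector of the
   black vertices on [x1 = 2nl], and the right-hand side is
   [b1^(2nl) b2 x^n sum_c p^(n-1-c) (-b q)^c] with [b = b2^2] and [x = 1] or [x = X].
   Explicit geometric sums in [x] and a linear polynomial solve this identity,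
   and their values at [w1^2] are the [F^(k,l)]. *)

From HB Require Import structures.
From mathcomp Require Import all_boot all_order all_algebra.
From mathcomp Require Import ring zify.
Set Implicit Arguments.
Unset Strict Implicit.
Unset Printing Implicit Defensive.
Import Order.TTheory GRing.Theory Num.Theory.
Local Open Scope ring_scope.

Lemma sum_ord_mul (R : nmodType) (M N : nat) (G : nat -> R) :
  \sum_(j < M * N) G j = \sum_(a < M) \sum_(r < N) G (a * N + r)%N.
Proof.
elim: M => [|M IH]; first by rewrite mul0n !big_ord0.
rewrite big_ord_recr /= -IH -!(big_mkord xpredT).
rewrite (big_cat_nat _ (n := M * N)) //=; last by rewrite mulSn leq_addl.
congr (_ + _).
rewrite -{1}[(M * N)%N]add0n big_addn mulSn addnK big_mkord.
by apply: eq_bigr => r _; rewrite addnC.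
Qed.

Lemma sum_indicator (R : pzSemiRingType) (N K : nat) (f : nat -> R) :
  \sum_(r < N) ((r : nat) == K)%:R * f r = if (K < N)%N then f K else 0.
Proof.
rewrite -[RHS](big_ord1_eq (@GRing.add R)) [RHS]big_mkcond.
by apply: eq_bigr => r _; case: eqP; rewrite ?mul1r ?mul0r.
Qed.

Lemma sum_grid_indicator (R : pzSemiRingType) (P : pred nat) (f : nat -> nat -> R)
    (M N c : nat) : (c < N)%N ->
  \sum_(a < M) \sum_(r < N) (P a && ((r : nat) == c))%:R * f a r
  = \sum_(a < M) (P a)%:R * f a c.
Proof.
move=> hc; apply: eq_bigr => a _.
under eq_bigr => r _ do rewrite -mulnb natrM -mulrA.
by rewrite -mulr_sumr sum_indicator hc.
Qed.

Lemma divmod_grid (N a r : nat) : (r < N.+1)%N ->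
  ((a * N.+1 + r) %/ N.+1 = a)%N * ((a * N.+1 + r) %% N.+1 = r)%N.
Proof.
move=> hr; split; first by rewrite divnMDl // divn_small // addn0.
by rewrite modnMDl modn_small.
Qed.

Lemma telescope_recurrence (R : comPzRingType) (p q : R) (y W : nat -> R) (n : nat) :
  (forall c, (c < n)%N -> p * y c + q * y c.+1 = W c) ->
  p ^+ n * y 0%N - (- q) ^+ n * y n = \sum_(c < n) p ^+ (n.-1 - c) * (- q) ^+ c * W c.
Proof.
move=> rec; suff: forall N, (N <= n)%N ->
    p ^+ N * y 0%N - (- q) ^+ N * y N = \sum_(c < N) p ^+ (N.-1 - c) * (- q) ^+ c * W c.
  exact.
elim=> [|N IH] hN; first by rewrite big_ord0 !expr0 !mul1r subrr.
rewrite big_ord_recr /= subnn expr0 mul1r -(rec N hN).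
have -> : \sum_(c < N) p ^+ (N - c) * (- q) ^+ c * W c
          = p * \sum_(c < N) p ^+ (N.-1 - c) * (- q) ^+ c * W c.
  rewrite mulr_sumr; apply: eq_bigr => c _.
  by rewrite (_ : (N - c = (N.-1 - c).+1)%N) ?exprS ?mulrA //; have := ltn_ord c; lia.
rewrite -IH ?(ltnW hN) // !exprS; ring.
Qed.

Definition hgeom (R : pzSemiRingType) (n : nat) (x y : R) : R :=
  \sum_(i < n) x ^+ (n.-1 - i) * y ^+ i.

Lemma rmorph_hgeom (R S : pzSemiRingType) (f : {rmorphism R -> S}) (n : nat) (x y : R) :
  f (hgeom n x y) = hgeom n (f x) (f y).
Proof. by rewrite rmorph_sum; apply: eq_bigr => i _; rewrite rmorphM !rmorphXn. Qed.

Lemma horner_hgeom (R : comNzRingType) (n : nat) (x y : {poly R}) (t : R) :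
  (hgeom n x y).[t] = hgeom n x.[t] y.[t].
Proof. exact: (rmorph_hgeom (horner_eval t)). Qed.

Lemma hgeom1 (C : numClosedFieldType) (n : nat) (y : C) : hgeom n 1 y = fn n y.
Proof. by apply: eq_bigr => m _; rewrite expr1n mul1r. Qed.

Lemma hgeom_fn (C : numClosedFieldType) (n : nat) (x y : C) : x != 0 ->
  hgeom n x y = x ^+ n.-1 * fn n (y / x).
Proof.
move=> x0; rewrite /fn mulr_sumr; apply: eq_bigr => m _.
have hm : (m <= n.-1)%N by have := ltn_ord m; lia.
by rewrite -[in RHS](subnK hm) exprD exprMn exprVn; field; rewrite expf_neq0.
Qed.

(* For [u := x - s g] and [v := x - s d] the hypothesis gives [p u = - b q v],
   while [s g hgeom n x u = x^n - u^n] and [s d hgeom n x v = x^n - v^n]. *)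
Lemma hgeom_split (R : comPzRingType) (n : nat) (p q b x g d : R) :
  x = g * p + d * b * q ->
  let s := p + b * q in
  s * (p ^+ n * (g * hgeom n x (x - s * g))
       - (- q) ^+ n * (b ^+ n * d * hgeom n x (x - s * d)))
  = s * (x ^+ n * hgeom n p (- (b * q))).
Proof.
move=> hx s; set u := x - s * g; set v := x - s * d.
have hu : s * (g * hgeom n x u) = x ^+ n - u ^+ n.
  by rewrite /hgeom subrXX /u mulrA; congr (_ * _); ring.
have hv : s * (d * hgeom n x v) = x ^+ n - v ^+ n.
  by rewrite /hgeom subrXX /v mulrA; congr (_ * _); ring.
have hs : s * hgeom n p (- (b * q)) = p ^+ n - (- (b * q)) ^+ n.
  by rewrite /hgeom subrXX opprK.
have puv : p ^+ n * u ^+ n = (- (b * q)) ^+ n * v ^+ n.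
  by rewrite -!exprMn; congr (_ ^+ _); rewrite /u /v /s hx; ring.
rewrite [RHS]mulrCA hs.
transitivity (p ^+ n * (s * (g * hgeom n x u)) - (- (b * q)) ^+ n * (s * (d * hgeom n x v))).
  by rewrite -[- (b * q)]mulrN exprMn; ring.
by rewrite hu hv !mulrBr puv; ring.
Qed.

Lemma size_hgeom (R : nzRingType) (n : nat) (x y : {poly R}) :
  (size x <= 2)%N -> (size y <= 2)%N -> (size (hgeom n x y) <= n)%N.
Proof.
move=> hx hy; apply: leq_trans (size_sum _ _ _) _; apply/bigmax_leqP_seq => m _ _.
apply: leq_trans (size_polyMleq _ _) _.
have ex := size_poly_exp_leq x (n.-1 - m); have ey := size_poly_exp_leq y m.
have := ltn_ord m; nia.
Qed.

Section AztecKasteleyn.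

Variables (C : numClosedFieldType) (n : nat).

Local Notation p := ('X + 'i%:P : {poly C}).
Local Notation q := (1 + 'i%:P * 'X : {poly C}).
Local Notation K := (Kast C n).
Local Notation cV := 'cV[C]_(n * n.+1).

Lemma q_neq0 : q != 0.
Proof. by apply/eqP => /(congr1 (horner^~ 0)); rewrite !hornerE /= => /eqP; rewrite oner_eq0. Qed.

Lemma p_add_q_neq0 (b : C) : p + b%:P * q != 0.
Proof.
apply/eqP => /(congr1 (horner^~ 'i)); rewrite !hornerE -expr2 sqrCi subrr mulr0 addr0.
by move/eqP; rewrite -mulr2n mulrn_eq0 /= (negbTE (neq0Ci C)).
Qed.

(* [p = X + i] and [-q = -i (X - i)] have no common root. *)
Lemma p_q_powers_eq0 (D E : {poly C}) : (size D <= n)%N ->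
  p ^+ n * D = (- q) ^+ n * E -> D = 0 /\ E = 0.
Proof.
move=> sD h.
have hq : - q = ('X - 'i%:P) * (- 'i)%:P.
  have hi : ('i%:P : {poly C}) ^+ 2 = -1 by rewrite -polyC_exp sqrCi polyCN.
  by rewrite polyCN; ring: hi.
have cop : coprimep (('X - 'i%:P) ^+ n) (p ^+ n).
  have -> : p = 'X - (- 'i)%:P by rewrite polyCN opprK.
  apply/coprimep_expl/coprimep_expr/coprimep_XsubC2.
  by rewrite -opprD oppr_eq0 -mulr2n mulrn_eq0 /= neq0Ci.
have D0 : D = 0.
  have dv : ('X - 'i%:P) ^+ n %| D.
    by rewrite -(Gauss_dvdpr _ cop) h hq exprMn -mulrA dvdp_mulr.
  apply/eqP; apply: contraT => nz.
  by have := dvdp_leq nz dv; rewrite size_exp_XsubC ltnNge sD.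
split=> //; move: h; rewrite D0 mulr0 => /esym/eqP.
by rewrite mulf_eq0 expf_eq0 oppr_eq0 (negbTE q_neq0) andbF => /eqP.
Qed.

(* [wpoly Y r] collects the entries of [Y] in the row [x2 = 2 r] of white
   vertices, the vertex [(2 a + 1, 2 r)] contributing [Y (2 a + 1, 2 r) X^a];
   [wcoef] is [0] off the grid. *)
Definition wcoef (Y : cV) (a r : nat) : C :=
  if (r < n.+1)%N then
    if insub (a * n.+1 + r)%N is Some j then Y j 0 else 0
  else 0.

Definition wpoly (Y : cV) (r : nat) : {poly C} := \poly_(a < n) wcoef Y a r.

Lemma wcoef_ge (Y : cV) (a r : nat) : (n <= a)%N -> wcoef Y a r = 0.
Proof.
move=> ha; rewrite /wcoef; case: ifP => // _; rewrite insubF //.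
by apply/negbTE; rewrite -leqNgt (leq_trans (leq_mul ha (leqnn _)) (leq_addr _ _)).
Qed.

Lemma coef_wpoly (Y : cV) (r k : nat) : (wpoly Y r)`_k = wcoef Y k r.
Proof. by rewrite coef_poly; case: ltnP => // h; rewrite wcoef_ge. Qed.

Lemma wcoef_ord (Y : cV) (j : 'I_(n * n.+1)) : wcoef Y (j %/ n.+1) (j %% n.+1) = Y j 0.
Proof. by rewrite /wcoef ltn_pmod // -divn_eq valK. Qed.

Lemma kast_entry_grid (m c a r : nat) :
  (let d1 : int := (m.*2)%:Z - (a.*2.+1)%:Z in
   let d2 : int := (c.*2.+1)%:Z - (r.*2)%:Z in
   if ((d1 == 1) && (d2 == 1)) || ((d1 == -1) && (d2 == -1)) then 1
   else if ((d1 == -1) && (d2 == 1)) || ((d1 == 1) && (d2 == -1)) then 'i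
   else 0 : C)
  = ((a.+1 == m) && (r == c))%:R + ((a == m) && (r == c.+1))%:R
    + 'i * ((a == m) && (r == c))%:R + 'i * ((a.+1 == m) && (r == c.+1))%:R.
Proof.
cbv zeta.
have -> : ((m.*2)%:Z - (a.*2.+1)%:Z == 1) = (a.+1 == m) by apply/eqP/eqP; lia.
have -> : ((m.*2)%:Z - (a.*2.+1)%:Z == -1) = (a == m) by apply/eqP/eqP; lia.
have -> : ((c.*2.+1)%:Z - (r.*2)%:Z == 1) = (r == c) by apply/eqP/eqP; lia.
have -> : ((c.*2.+1)%:Z - (r.*2)%:Z == -1) = (r == c.+1) by apply/eqP/eqP; lia.
have : ~~ ((a.+1 == m) && (a == m)) by apply/negP => /andP[/eqP ? /eqP ?]; lia.
have : ~~ ((r == c) && (r == c.+1)) by apply/negP => /andP[/eqP ? /eqP ?]; lia.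
by case: (a.+1 == m); case: (a == m); case: (r == c); case: (r == c.+1) => //= _ _;
  rewrite ?mulr0 ?mulr1 ?addr0 ?add0r.
Qed.

Lemma coef_recurrence (y z : {poly C}) (m : nat) :
  (p * y + q * z)`_m = ('X * y)`_m + 'i * y`_m + z`_m + 'i * ('X * z)`_m.
Proof.
have -> : p * y + q * z = 'X * y + 'i%:P * y + z + 'i%:P * ('X * z) by ring.
by rewrite !coefD !coefCM.
Qed.

Lemma Kast_mul_coef (Y : cV) (c m : nat) (i : 'I_(n * n.+1)) :
  (c < n)%N -> (m < n.+1)%N -> nat_of_ord i = (c * n.+1 + m)%N ->
  (K *m Y) i 0 = (p * wpoly Y c + q * wpoly Y c.+1)`_m.
Proof.
move=> hc hm hi.
have [ec em] := divmod_grid c hm; rewrite -hi in ec em.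
have wm r : (if (m < n)%N then wcoef Y m r else 0) = wcoef Y m r.
  by case: ltnP => // h; rewrite wcoef_ge.
have wmS r : \sum_(a < n) ((a : nat).+1 == m)%:R * wcoef Y a r
             = ('X * wpoly Y r)`_m.
  case: m {hm hi em wm} => [|m]; rewrite coefXM coef_wpoly /=.
    by rewrite big1 // => a _; rewrite mul0r.
  under eq_bigr => a _ do rewrite eqSS.
  by rewrite (sum_indicator _ _ (fun a => wcoef Y a r)); case: ltnP => // h; rewrite wcoef_ge.
have wm0 r : \sum_(a < n) ((a : nat) == m)%:R * wcoef Y a r = (wpoly Y r)`_m.
  by rewrite (sum_indicator _ _ (fun a => wcoef Y a r)) wm coef_wpoly.
rewrite mxE (eq_bigr (fun j : 'I_(n * n.+1) =>
    let a := (j %/ n.+1)%N in let r := (j %% n.+1)%N in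
    (((a.+1 == m) && (r == c))%:R + ((a == m) && (r == c.+1))%:R
    + 'i * ((a == m) && (r == c))%:R + 'i * ((a.+1 == m) && (r == c.+1))%:R)
    * wcoef Y a r)); last first.
  move=> j _; rewrite mxE -wcoef_ord; congr (_ * _).
  by rewrite /kast_entry /bx1 /bx2 /wx1 /wx2 ec em; exact: kast_entry_grid.
rewrite (sum_ord_mul _ _ (fun j => let a := (j %/ n.+1)%N in let r := (j %% n.+1)%N in _)) /=.
under eq_bigr => a _ do under eq_bigr => r _ do
  rewrite !(divmod_grid a (ltn_ord r)) !mulrDl -!mulrA.
under eq_bigr => a _ do rewrite !big_split /= -!mulr_sumr.
rewrite !big_split /= -!mulr_sumr !(sum_grid_indicator (fun a => a.+1 == m)) ?ltnS ?(ltnW hc) //.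
rewrite !(sum_grid_indicator (fun a => a == m)) ?ltnS ?(ltnW hc) //.
by rewrite !wmS !wm0 coef_recurrence; ring.
Qed.

Lemma Kast_recurrence (Y : cV) (V : nat -> nat -> C) :
  (forall c m (i : 'I_(n * n.+1)), (c < n)%N -> (m < n.+1)%N ->
     nat_of_ord i = (c * n.+1 + m)%N -> (K *m Y) i 0 = V c m) ->
  forall c, (c < n)%N -> p * wpoly Y c + q * wpoly Y c.+1 = \poly_(m < n.+1) V c m.
Proof.
move=> hV c hc; apply/polyP => m; rewrite coef_poly; case: ltnP => hm.
  have hi : (c * n.+1 + m < n * n.+1)%N by nia.
  by rewrite -(hV c m (Ordinal hi)) // (Kast_mul_coef _ hc hm).
case: m hm => // m hm; rewrite coef_recurrence !coefXM /= !coef_wpoly.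
by rewrite !wcoef_ge ?mulr0 ?addr0 // leqW.
Qed.

(* The recurrence with zero right-hand side telescopes to [p^n y_0 = (-q)^n y_n],
   whence [y_0 = 0], and then every [y_c] vanishes. *)
Lemma Kast_mul_eq0 (Y : cV) : K *m Y = 0 -> Y = 0.
Proof.
move=> KY0.
have rec c : (c < n)%N -> p * wpoly Y c + q * wpoly Y c.+1 = 0.
  move=> hc; rewrite (@Kast_recurrence _ (fun _ _ => 0)) //; last first.
    by move=> c' m i _ _ _; rewrite KY0 mxE.
  by apply/polyP => m; rewrite coef_poly coef0 if_same.
have := telescope_recurrence rec; rewrite big1 => [|c _]; last by rewrite mulr0.
move/eqP; rewrite subr_eq0 => /eqP /(p_q_powers_eq0 (size_poly _ _)) [y0 _].
have yc c : (c <= n)%N -> wpoly Y c = 0.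
  elim: c => [|c IH] hc //; move: (rec c hc); rewrite IH ?(ltnW hc) // mulr0 add0r.
  by move/eqP; rewrite mulf_eq0 (negbTE q_neq0) => /eqP.
apply/matrixP => j k; rewrite (ord1 k) [RHS]mxE -wcoef_ord -coef_wpoly yc ?coef0 //.
by rewrite -ltnS ltn_pmod.
Qed.

Lemma Kast_unit : K \in unitmx.
Proof.
rewrite -unitmx_tr -row_free_unit; apply: inj_row_free => v hv.
have : K *m v^T = 0 by rewrite -[K]trmxK -trmx_mul hv trmx0.
by move/Kast_mul_eq0/(congr1 trmx); rewrite trmxK trmx0.
Qed.

Definition bside (l : nat) (b1 b2 : C) : cV :=
  \col_i (if bx1 i == (2 * n * l)%N then b1 ^+ (2 * n * l) * b2 ^+ bx2 i else 0).

Lemma Hgen_wpoly (k l : nat) (w1 w2 b1 b2 : C) : (k <= 1)%N ->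
  Hgen n k l w1 w2 b1 b2
  = w1 * w2 ^+ (2 * n * k) * (wpoly (Kinv C n *m bside l b1 b2) (n * k)).[w1 ^+ 2].
Proof.
move=> hk; set Y := Kinv C n *m bside l b1 b2.
transitivity (\sum_(j < n * n.+1 | wx2 j == (2 * n * k)%N)
                w1 ^+ wx1 j * w2 ^+ (2 * n * k) * Y j 0).
  apply: eq_bigr => j _; rewrite /Y mxE big_mkcond mulr_sumr; apply: eq_bigr => i _.
  by rewrite mxE; case: ifP => _; [ring | rewrite !mulr0].
rewrite big_mkcond (eq_bigr (fun j : 'I_(n * n.+1) => let a := (j %/ n.+1)%N in
  let r := (j %% n.+1)%N in
  if (r.*2 == 2 * n * k)%N then w1 ^+ a.*2.+1 * w2 ^+ (2 * n * k) * wcoef Y a r else 0));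
  last by move=> j _; rewrite /= wcoef_ord.
rewrite (sum_ord_mul _ _ (fun j => let a := (j %/ n.+1)%N in let r := (j %% n.+1)%N in _)).
rewrite /wpoly horner_poly mulr_sumr; apply: eq_bigr => a _ /=.
under eq_bigr => r _ do rewrite !(divmod_grid a (ltn_ord r)).
rewrite -big_mkcond (eq_bigl (fun r : 'I_n.+1 => r == (n * k)%N :> nat)) => [|r]; last first.
  by apply/eqP/eqP; lia.
rewrite (big_ord1_eq _ (fun r => w1 ^+ a.*2.+1 * w2 ^+ (2 * n * k) * wcoef Y a r)).
rewrite (_ : (n * k < n.+1)%N); last by nia.
by rewrite exprS -mul2n mulnC exprM exprAC; ring.
Qed.

Lemma Kinv_bside_telescope (l : nat) (b1 b2 : C) : (l <= 1)%N ->
  let y := wpoly (Kinv C n *m bside l b1 b2) in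
  p ^+ n * y 0%N - (- q) ^+ n * y n
  = (b1 ^+ (2 * n * l) * b2)%:P * 'X^(n * l) * hgeom n p (- ((b2 ^+ 2)%:P * q)).
Proof.
move=> hl y.
have KY : K *m (Kinv C n *m bside l b1 b2) = bside l b1 b2.
  by rewrite /Kinv mulKVmx // Kast_unit.
rewrite (telescope_recurrence (W := fun c => (b1 ^+ (2 * n * l) * b2 ^+ (2 * c + 1))%:P
                                               * 'X^(n * l))) => [|c hc]; last first.
  rewrite (@Kast_recurrence _ (fun c m =>
    if m == (n * l)%N then b1 ^+ (2 * n * l) * b2 ^+ (2 * c + 1) else 0)) //.
    apply/polyP => m; rewrite coef_poly coefCM coefXn.
    case: eqVneq => [->|_]; last by rewrite mulr0 if_same.
    by rewrite mulr1 (_ : (n * l < n.+1)%N) //; nia.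
  move=> c' m i _ hm hi; have [ec em] := divmod_grid c' hm; rewrite -hi in ec em.
  rewrite KY mxE /bx1 /bx2 ec em -!mul2n addn1.
  by rewrite (_ : (2 * m == 2 * n * l)%N = (m == n * l)%N) //; apply/eqP/eqP; lia.
rewrite /hgeom !mulr_sumr; apply: eq_bigr => c _.
by rewrite -mulrN exprMn -polyC_exp -exprM addn1 exprS !polyCM; ring.
Qed.

Lemma size_p_add_q_mulC (b e : C) : (size ((p + b%:P * q) * e%:P)%R <= 2)%N.
Proof.
have -> : (p + b%:P * q) * e%:P = (e * (1 + b * 'i)) *: 'X + (e * (b + 'i))%:P.
  by rewrite -mul_polyC !(polyCM, polyCD); ring.
rewrite (leq_trans (size_polyD _ _)) // geq_max (leq_trans (size_scale_leq _ _)) ?size_polyX //=.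
exact: leq_trans (size_polyC_leq1 _) _.
Qed.

Lemma Kinv_bside_ends (l : nat) (b1 b2 g d : C) (x : {poly C}) :
  (l <= 1)%N -> (size x <= 2)%N -> x ^+ n = 'X^(n * l) ->
  x = g%:P * p + (d * b2 ^+ 2)%:P * q ->
  let y := wpoly (Kinv C n *m bside l b1 b2) in
  let s := p + (b2 ^+ 2)%:P * q in
  y 0%N = (b1 ^+ (2 * n * l) * b2 * g)%:P * hgeom n x (x - s * g%:P)
  /\ y n = (b1 ^+ (2 * n * l) * b2 ^+ (2 * n).+1 * d)%:P * hgeom n x (x - s * d%:P).
Proof.
move=> hl sx xn hx y s.
set c := b1 ^+ (2 * n * l) * b2.
set Y0 := (c * g)%:P * _; set Yn := (_ * d)%:P * _.
have size_hgeom_s e : (size (hgeom n x (x - s * e%:P)%R) <= n)%N.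
  apply: size_hgeom => //; rewrite (leq_trans (size_polyD _ _)) // geq_max sx size_polyN.
  exact: size_p_add_q_mulC.
suff : p ^+ n * (y 0%N - Y0) = (- q) ^+ n * (y n - Yn).
  case/p_q_powers_eq0 => [|/subr0_eq -> /subr0_eq ->] //.
  rewrite (leq_trans (size_polyD _ _)) // geq_max size_polyN size_poly /=.
  by rewrite /Y0 mul_polyC (leq_trans (size_scale_leq _ _)).
have E : p ^+ n * Y0 - (- q) ^+ n * Yn = p ^+ n * y 0%N - (- q) ^+ n * y n.
  apply: (mulfI (p_add_q_neq0 (b2 ^+ 2))); rewrite (Kinv_bside_telescope _ _ hl) -xn.
  rewrite polyCM in hx; rewrite -[in RHS]mulrA [in RHS]mulrCA -(hgeom_split n hx) /Y0 /Yn.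
  by rewrite -polyC_exp -exprM [b2 ^+ (2 * n).+1]exprS /c /s !polyCM; ring.
transitivity ((p ^+ n * y 0%N - (- q) ^+ n * y n) - (p ^+ n * Y0 - (- q) ^+ n * Yn)
              + (- q) ^+ n * (y n - Yn)); first by ring.
by rewrite E subrr add0r.
Qed.

Lemma p_q_combination (g e a c : C) : g * 'i + e = a -> g + e * 'i = c ->
  g%:P * p + e%:P * q = a%:P + c%:P * 'X.
Proof. by move=> <- <-; rewrite !(polyCD, polyCM); ring. Qed.

Lemma Hgen_l0 (k : nat) (w1 w2 b1 b2 : C) : (0 < n)%N -> (k <= 1)%N -> b2 != 0 ->
  Hgen n k 0 w1 w2 b1 b2 = Fgen n k 0 w1 w2 b1 b2.
Proof.
move=> hn hk hb2; have hi := sqrCi C.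
have hx : 1 = (- 'i / 2)%:P * p + ((2 * b2 ^+ 2)^-1 * b2 ^+ 2)%:P * q.
  by rewrite (@p_q_combination _ _ 1 0) ?mul0r ?addr0 //; field: hi.
have xn : 1 ^+ n = 'X^(n * 0) :> {poly C} by rewrite expr1n muln0 expr0.
have [e0 en] := Kinv_bside_ends b1 (leq0n 1) (leq_trans (size_polyC_leq1 1) (leqnSn 1)) xn hx.
rewrite Hgen_wpoly //; case: k hk => [|[|//]] _; rewrite ?muln0 ?muln1 ?e0 ?en muln0 expr0;
  rewrite hornerM hornerC horner_hgeom hornerC hgeom1 !(hornerD, hornerN, hornerM, hornerC, hornerX);
  rewrite /Fgen /Fn.
- rewrite (_ : 1 - _ = (1 + b2 ^+ 2 * 'i) * (1 + w1 ^+ 2 * 'i) / 2); last by field: hi.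
  by ring.
- rewrite (_ : 1 - _ = (1 + - (b2 ^+ 2)^-1 * 'i) * (1 + - w1 ^+ 2 * 'i) / 2); last first.
    by field: hi.
  rewrite (_ : (2 * n).+1 = 2 * n - 1 + 2)%N ?exprD; last by lia.
  by field: hi.
Qed.

Lemma Hgen_l1 (k : nat) (w1 w2 b1 b2 : C) : (0 < n)%N -> (k <= 1)%N ->
  w1 != 0 -> b2 != 0 -> Hgen n k 1 w1 w2 b1 b2 = Fgen n k 1 w1 w2 b1 b2.
Proof.
move=> hn hk hw1 hb2; have hi := sqrCi C.
have hx : 'X = (2^-1)%:P * p + (- 'i / (2 * b2 ^+ 2) * b2 ^+ 2)%:P * q.
  by rewrite (@p_q_combination _ _ 0 1) ?polyC0 ?polyC1 ?add0r ?mul1r //; field: hi.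
have xn : 'X ^+ n = 'X^(n * 1) :> {poly C} by rewrite muln1.
have [e0 en] := Kinv_bside_ends b1 (leqnn 1) (eq_leq (size_polyX C)) xn hx.
have hw : w1 ^+ 2 != 0 by rewrite expf_neq0.
have w1n : w1 ^+ (2 * n - 1) = w1 * (w1 ^+ 2) ^+ n.-1.
  by rewrite -exprM -exprS; congr (_ ^+ _); lia.
rewrite Hgen_wpoly //; case: k hk => [|[|//]] _; rewrite ?muln0 ?muln1 ?e0 ?en muln1;
  rewrite hornerM hornerC horner_hgeom hornerX (hgeom_fn _ _ hw);
  rewrite !(hornerD, hornerN, hornerM, hornerC, hornerX) /Fgen /Fn w1n.
- rewrite (_ : (_ - _) / _ = (1 + - b2 ^+ 2 * 'i) * (1 + - w1 ^- 2 * 'i) / 2).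
    by rewrite expr0; field: hi.
  by field: hi.
- rewrite (_ : (_ - _) / _ = (1 + b2 ^- 2 * 'i) * (1 + w1 ^- 2 * 'i) / 2).
    rewrite (_ : (2 * n).+1 = 2 * n - 1 + 2)%N ?exprD; last by lia.
    by field: hi.
  by field: hi; rewrite hw1 hb2.
Qed.

End AztecKasteleyn.

Theorem lemma3p4 (C : numClosedFieldType) (n : nat) (hn : (0 < n)%N)
    (k l : nat) (hk : (k <= 1)%N) (hl : (l <= 1)%N)
    (w1 w2 b1 b2 : C) (hw1 : w1 != 0) (hb2 : b2 != 0) :
  Hgen n k l w1 w2 b1 b2 = Fgen n k l w1 w2 b1 b2.
Proof.
case: l hl => [|[|//]] _; first exact: Hgen_l0.
exact: Hgen_l1.
Qed.
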